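(* Let $n\geqslant 2$, let $C=\{x,y,e_1,\ldots,e_n\}$ and let $U$ be the set of monoid relations on $C$: (U1) $e_i^2=e_i$ for $1\leqslant i\leqslant n$; (U2) $xy=e_n$ and $yx=e_1$; (U3) $xe_1=x$ and $e_1y=y$; (U4) $e_ie_j=e_je_i$ for $1\leqslant i<j\leqslant n$; (U5) $xe_{i+1}=e_ix$ for $1\leqslant i\leqslant n-1$; (U6) $xe_2\cdots e_n=e_1e_2\cdots e_n$. Then $\langle C\mid U\rangle$ is a monoid presentation of $\mathcal{OCI}_n$ (with respect to the map sending each letter to the transformation of the same name). It has $n+2$ generators and $\frac12(n^2+3n+8)$ relations.
   Context: Let $\Omega_n=\{1<\cdots<n\}$, $\mathcal{I}_n$ the symmetric inverse monoid on $\Omega_n$ (maps on the right, composed left to right). $g$ is the permutation $ig=i+1$ ($1\leqslant i\leqslant n-1$), $ng=1$; $\mathcal{C}_n=\{1,g,\ldots,g^{n-1}\}$; $\mathcal{CI}_n=\{\alpha\in\mathcal{I}_n\mid \alpha=\sigma|_{\mathrm{Dom}(\alpha)}\text{ for some }\sigma\in\mathcal{C}_n\}$; $\mathcal{OCI}_n$ is the submonoid of order-preserving elements of $\mathcal{CI}_n$. $e_i$ is the partial identity on $\Omega_n\setminus\{i\}$; $x$ has domain $\{1,\ldots,n-1\}$ with $ix=i+1$; $y=x^{-1}$ has domain $\{2,\ldots,n\}$ with $iy=i-1$. A presentation $\langle C\mid U\rangle$ defines $M$ via an injective map $C\to M$ whose image generates $M$ if the kernel of the induced homomorphism $C^*\to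 M$ is the smallest congruence on $C^*$ containing $U$. *)

From HB Require Import structures.
From mathcomp Require Import all_boot.
Set Implicit Arguments. Unset Strict Implicit. Unset Printing Implicit Defensive.

(* Convention: Omega_n = {1 < ... < n} is modelled by 'I_n = {0 < ... < n-1},
   the point i of the paper being the ordinal i-1. *)

(* Partial transformations of Omega_n: f i = None means i \notin Dom f. *)
Definition pmap (n : nat) := {ffun 'I_n -> option 'I_n}.

(* Composition, maps on the right, left to right: i (a b) = (i a) b. *)
Definition pcomp n (a b : pmap n) : pmap n := [ffun i => obind b (a i)].
Definition pid n : pmap n := [ffun i => Some i].

Definition in_dom n (a : pmap n) (i : 'I_n) : bool := a i != None.

Definition is_pinj n (a : pmap n) : bool :=
  [forall i, forall j, (in_dom a i && (a i == a j)) ==> (i == j)].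

Definition gcyc n (i : 'I_n) : 'I_n := ordS i.

Definition in_Cn n (s : 'I_n -> 'I_n) : Prop :=
  exists2 k, k < n & forall i, s i = iter k (@gcyc n) i.

Definition in_CI n (a : pmap n) : Prop :=
  is_pinj a /\ exists s, in_Cn s /\ forall i, in_dom a i -> a i = Some (s i).

Definition order_preserving n (a : pmap n) : Prop :=
  forall i j (ai aj : 'I_n), a i = Some ai -> a j = Some aj ->
    i <= j -> ai <= aj.

Definition in_OCI n (a : pmap n) : Prop := in_CI a /\ order_preserving a.

(* e_i (paper index i+1): partial identity on Omega_n \ {i}. *)
Definition pe n (i : 'I_n) : pmap n := [ffun j => if j == i then None else Some j].
Definition px n : pmap n := [ffun j : 'I_n => if j.+1 < n then Some (ordS j) else None].
Definition py n : pmap n := [ffun j : 'I_n => if 0 < j then Some (ord_pred j) else None].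

Inductive letter (n : nat) := LX | LY | LE of 'I_n.
Arguments LX {n}. Arguments LY {n}.

Definition letter_enc n (c : letter n) : option (option 'I_n) :=
  match c with LX => None | LY => Some None | LE i => Some (Some i) end.
Definition letter_dec n (o : option (option 'I_n)) : letter n :=
  match o with None => LX | Some None => LY | Some (Some i) => LE i end.
Lemma letter_encK n : cancel (@letter_enc n) (@letter_dec n).
Proof. by case. Qed.
HB.instance Definition _ n := Finite.copy (letter n) (can_type (@letter_encK n)).

Definition gen n (c : letter n) : pmap n :=
  match c with LX => px n | LY => py n | LE i => pe i end.

Definition evalw n (f : letter n -> pmap n) (w : seq (letter n)) : pmap n :=
  foldr (fun c acc => pcomp (f c) acc) (pid n) w.

Inductive cgr (A : eqType) (U : seq (seq A * seq A)) : seq A -> seq A -> Prop :=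
| cgr_rel u v : (u, v) \in U -> cgr U u v
| cgr_refl u : cgr U u u
| cgr_sym u v : cgr U u v -> cgr U v u
| cgr_trans u v w : cgr U u v -> cgr U v w -> cgr U u w
| cgr_mul u v u' v' : cgr U u v -> cgr U u' v' -> cgr U (u ++ u') (v ++ v').

Definition is_presentation n (M : pmap n -> Prop) (f : letter n -> pmap n)
    (U : seq (seq (letter n) * seq (letter n))) : Prop :=
  [/\ forall c, M (f c),
      injective f,
      forall a, M a -> exists w, evalw f w = a &
      forall u v, evalw f u = evalw f v <-> cgr U u v].

(* The relations U (paper indices i+1 for ordinal i). *)
Definition es_tail n : seq (letter n) := [seq LE j | j <- enum 'I_n & 0 < val j].

Definition U1 n : seq (seq (letter n) * seq (letter n)) := [seq ([:: LE i; LE i], [:: LE i]) | i : 'I_n <- enum 'I_n].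
Definition U2 n : seq (seq (letter n) * seq (letter n)) :=
  [seq ([:: LX; LY], [:: LE i]) | i : 'I_n <- enum 'I_n & val i == n.-1] ++
  [seq ([:: LY; LX], [:: LE i]) | i : 'I_n <- enum 'I_n & val i == 0].
Definition U3 n : seq (seq (letter n) * seq (letter n)) :=
  [seq ([:: LX; LE i], [:: LX]) | i : 'I_n <- enum 'I_n & val i == 0] ++
  [seq ([:: LE i; LY], [:: LY]) | i : 'I_n <- enum 'I_n & val i == 0].
Definition U4 n : seq (seq (letter n) * seq (letter n)) :=
  [seq ([:: LE i; LE j], [:: LE j; LE i]) | i : 'I_n <- enum 'I_n, j : 'I_n <- [seq j : 'I_n <- enum 'I_n | i < j]].
Definition U5 n : seq (seq (letter n) * seq (letter n)) :=
  [seq ([:: LX; LE j], [:: LE i; LX]) | i : 'I_n <- enum 'I_n, j : 'I_n <- [seq j : 'I_n <- enum 'I_n | val j == (val i).+1]].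
Definition U6 n : seq (seq (letter n) * seq (letter n)) :=
  [seq (LX :: es_tail n, LE i :: es_tail n) | i : 'I_n <- enum 'I_n & val i == 0].

Definition rels n : seq (seq (letter n) * seq (letter n)) := U1 n ++ U2 n ++ U3 n ++ U4 n ++ U5 n ++ U6 n.

From Pilot Require Import Defs.
From mathcomp Require Import all_boot zify.
From Stdlib Require Import Setoid Morphisms.
Set Implicit Arguments. Unset Strict Implicit. Unset Printing Implicit Defensive.

(* Every word is congruent to a normal form e_S x^k or e_S y^k, where e_S is the product of the
   e_i for i in S: the letters x and y move to the right across the idempotents (x e_(i+1) =
   e_i x and its consequence y e_i = e_(i+1) y), and xy, yx collapse to e_n, e_1.  Such a normal
   form acts as the partial shift i |-> i + k (resp. i - k) restricted to the complement of S.
   If its domain is nonempty, one point of the domain determines the shift, and the domain then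
   determines S up to idempotents that the relations absorb into x^k or y^k; if it is empty,
   (U6) shows that the normal form is congruent to the zero e_1 ... e_n.  Hence words with the
   same image are congruent.  Conversely, an element of OCI_n restricts a rotation g^k, and
   order preservation forces it to agree with x^k or with y^(n-k) on its whole domain, so it is
   the image of a normal form. *)

(* MathComp also uses the names [pmap] and [pcomp]. *)
Local Notation pmap := Defs.pmap.
Local Notation pcomp := Defs.pcomp.

Section Congruence.
Variables (A : eqType) (U : seq (seq A * seq A)).

Lemma cgr_equivalence : Equivalence (cgr U).
Proof.
split=> [u | u v | u v w]; [exact: cgr_refl | exact: cgr_sym | exact: cgr_trans].
Qed.

Lemma cgr_rule u v w : (u, v) \in U -> cgr U (u ++ w) (v ++ w).
Proof. by move=> uv; apply: cgr_mul; [apply: cgr_rel | apply: cgr_refl]. Qed.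

End Congruence.

#[global] Existing Instance cgr_equivalence.
#[global] Hint Extern 0 (cgr _ _ _) => reflexivity : core.

Add Parametric Morphism (A : eqType) (U : seq (seq A * seq A)) : (@cat A)
  with signature cgr U ==> cgr U ==> cgr U as cat_cgr.
Proof. by move=> u v uv u' v' uv'; apply: cgr_mul. Qed.

Add Parametric Morphism (A : eqType) (U : seq (seq A * seq A)) : (@cons A)
  with signature eq ==> cgr U ==> cgr U as cons_cgr.
Proof. by move=> a u v uv; apply: (@cgr_mul _ _ [:: a] [:: a]). Qed.

Section Evaluation.
Variables (n : nat) (f : letter n -> pmap n).

Lemma pcompE (a b : pmap n) i : pcomp a b i = obind b (a i).
Proof. by rewrite ffunE. Qed.

Lemma pcompA : associative (@pcomp n).
Proof.
by move=> a b d; apply/ffunP => i; rewrite !pcompE; case: (a i) => //= j; rewrite pcompE.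
Qed.

Lemma pcomp1m : left_id (pid n) (@pcomp n).
Proof. by move=> a; apply/ffunP => i; rewrite pcompE ffunE. Qed.

Lemma pcompm1 : right_id (pid n) (@pcomp n).
Proof. by move=> a; apply/ffunP => i; rewrite pcompE; case: (a i) => //= j; rewrite ffunE. Qed.

Lemma evalw_cat u v : evalw f (u ++ v) = pcomp (evalw f u) (evalw f v).
Proof. by elim: u => [|a u IH] /=; rewrite ?pcomp1m // IH pcompA. Qed.

Lemma evalw1 a : evalw f [:: a] = f a.
Proof. exact: pcompm1. Qed.

Lemma evalw_cons a w : evalw f (a :: w) = pcomp (f a) (evalw f w).
Proof. by []. Qed.

Lemma evalw2 a b : evalw f [:: a; b] = pcomp (f a) (f b).
Proof. by rewrite /= pcompm1. Qed.

Lemma evalw_cgr (U : seq (seq (letter n) * seq (letter n))) u v :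
  (forall u v, (u, v) \in U -> evalw f u = evalw f v) ->
  cgr U u v -> evalw f u = evalw f v.
Proof.
move=> fU; elim=> {u v} [u v /fU | u | u v _ -> | u v w _ -> _ -> | u v u' v' _ e _ e'] //.
by rewrite !evalw_cat e e'.
Qed.

End Evaluation.

Section Presentation.
Variable m : nat.
Local Notation n := m.+2.
Local Notation "u ≡ v" := (cgr (rels n) u v) (at level 70).
Local Notation eL k := (LE (inord k : 'I_n)).
Local Notation X := (@LX n).
Local Notation Y := (@LY n).

(** * The defining relations *)

Lemma val_inord k : k < n -> val (inord k : 'I_n) = k.
Proof. exact: inordK. Qed.

Lemma inord_eq (i : 'I_n) k : k < n -> (i == inord k) = (val i == k).
Proof. by move=> kn; rewrite -(inj_eq val_inj) /= inordK. Qed.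

Lemma e_idem (i : 'I_n) w : [:: LE i, LE i & w] ≡ LE i :: w.
Proof. by apply: (@cgr_rule _ _ [:: LE i; LE i] [:: LE i]); rewrite mem_cat map_f ?mem_enum. Qed.

Lemma xy_elast w : [:: X, Y & w] ≡ eL m.+1 :: w.
Proof.
apply: (@cgr_rule _ _ [:: X; Y] [:: eL m.+1]); rewrite /rels /U2 !mem_cat.
by rewrite (map_f (fun i : 'I_n => ([:: X; Y], [:: LE i]))) ?orbT //
  mem_filter mem_enum val_inord ?eqxx.
Qed.

Lemma yx_e0 w : [:: Y, X & w] ≡ eL 0 :: w.
Proof.
apply: (@cgr_rule _ _ [:: Y; X] [:: eL 0]); rewrite /rels /U2 !mem_cat.
by rewrite (map_f (fun i : 'I_n => ([:: Y; X], [:: LE i]))) ?orbT //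
  mem_filter mem_enum val_inord ?eqxx.
Qed.

Lemma xe0_x w : [:: X, eL 0 & w] ≡ X :: w.
Proof.
apply: (@cgr_rule _ _ [:: X; eL 0] [:: X]); rewrite /rels /U3 !mem_cat.
by rewrite (map_f (fun i : 'I_n => ([:: X; LE i], [:: X]))) ?orbT //
  mem_filter mem_enum val_inord ?eqxx.
Qed.

Lemma e0y_y w : [:: eL 0, Y & w] ≡ Y :: w.
Proof.
apply: (@cgr_rule _ _ [:: eL 0; Y] [:: Y]); rewrite /rels /U3 !mem_cat.
by rewrite (map_f (fun i : 'I_n => ([:: LE i; Y], [:: Y]))) ?orbT //
  mem_filter mem_enum val_inord ?eqxx.
Qed.

Lemma e_comm (i j : 'I_n) w : [:: LE i, LE j & w] ≡ [:: LE j, LE i & w].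
Proof.
wlog ij : i j / i < j => [hwlog|].
  by case: (ltngtP i j) => [/hwlog | /hwlog h | /val_inj->] //; symmetry; apply: h.
apply: (@cgr_rule _ _ [:: LE i; LE j] [:: LE j; LE i]); rewrite /rels /U4 !mem_cat.
rewrite (@allpairs_f_dep _ _ _ (fun i j : 'I_n => ([:: LE i; LE j], [:: LE j; LE i]))) ?orbT //.
  by rewrite mem_enum.
by rewrite mem_filter mem_enum ij.
Qed.

Lemma xeS_ex k w : k < m.+1 -> [:: X, eL k.+1 & w] ≡ [:: eL k, X & w].
Proof.
move=> km; apply: (@cgr_rule _ _ [:: X; eL k.+1] [:: eL k; X]); rewrite /rels /U5 !mem_cat.
rewrite (@allpairs_f_dep _ _ _ (fun i j : 'I_n => ([:: X; LE j], [:: LE i; X]))) ?orbT //.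
  by rewrite mem_enum.
by rewrite mem_filter mem_enum !val_inord ?eqxx // ltnW.
Qed.

Lemma elast_x w : [:: eL m.+1, X & w] ≡ X :: w.
Proof. by rewrite -(xy_elast (X :: w)) yx_e0 xe0_x. Qed.

Lemma y_elast w : [:: Y, eL m.+1 & w] ≡ Y :: w.
Proof. by rewrite -xy_elast yx_e0 e0y_y. Qed.

Lemma y_e k w : k < m.+1 -> [:: Y, eL k & w] ≡ [:: eL k.+1, Y & w].
Proof.
move=> km; rewrite -y_elast e_comm -xy_elast -(xeS_ex _ km) yx_e0.
by rewrite e_comm e0y_y.
Qed.

Definition xy (b : bool) := if b then X else Y.

Lemma xy_xyC b w : [:: xy b, xy (~~ b) & w] ≡ eL (if b then m.+1 else 0) :: w.
Proof. by case: b; [apply: xy_elast | apply: yx_e0]. Qed.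

(** * Words in the idempotents *)

(* [eL k] is e_(k+1) when k < n; otherwise [inord] returns the junk value e_1, hence the
   [bounded] hypotheses below. *)
Definition bounded (s : seq nat) := all (fun k => k < n) s.

Definition eword (s : seq nat) : seq (letter n) := [seq eL k | k <- s].

Lemma eword_cat s t : eword (s ++ t) = eword s ++ eword t.
Proof. exact: map_cat. Qed.

Lemma bounded_iota : bounded (iota 0 n).
Proof. by apply/allP => j; rewrite mem_iota. Qed.

Lemma es_tailE : es_tail n = eword (iota 1 m.+1).
Proof.
have -> : iota 1 m.+1 = [seq k <- iota 0 n | 0 < k].
  rewrite /=; congr (_ :: _).
  by apply/esym/all_filterP/allP => k; rewrite mem_iota => /andP[/ltnW].
rewrite /es_tail /eword -val_enum_ord filter_map -map_comp.
by apply: eq_map => j; rewrite /= inord_val.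
Qed.

Lemma x_etail : X :: eword (iota 1 m.+1) ≡ eword (iota 0 n).
Proof.
rewrite -[eword (iota 0 n)]/(eL 0 :: eword (iota 1 m.+1)) -es_tailE.
rewrite -[X :: _]cats0 -[eL 0 :: _]cats0; apply: cgr_rule; rewrite /rels !mem_cat.
by rewrite (map_f (fun i : 'I_n => (X :: es_tail n, LE i :: es_tail n))) ?orbT //
  mem_filter mem_enum val_inord.
Qed.

Lemma e_eword_comm k s w : eL k :: eword s ++ w ≡ eword s ++ eL k :: w.
Proof. by elim: s => [|j s IH] //=; rewrite e_comm IH. Qed.

Lemma eword_perm s t : perm_eq s t -> eword s ≡ eword t.
Proof.
elim: s t => [|k s IH] t st; first by rewrite perm_sym in st; rewrite (perm_nilP st).
have kt : k \in t by rewrite -(perm_mem st) mem_head.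
move: st; case/splitPr: kt => t1 t2.
rewrite perm_sym (perm_catCA t1 [:: k] t2) /= perm_cons perm_sym => /IH st.
by rewrite /= st !eword_cat e_eword_comm.
Qed.

Lemma eword_undup s : eword s ≡ eword (undup s).
Proof.
elim: s => [|k s IH] //=; case: ifP => [ks | _]; last by rewrite IH.
rewrite -IH; case/splitPr: ks => s1 s2.
by rewrite eword_cat /= e_eword_comm e_idem.
Qed.

Lemma eword_eq_mem s t : s =i t -> eword s ≡ eword t.
Proof.
move=> st; rewrite eword_undup [eword t]eword_undup; apply: eword_perm.
by apply: uniq_perm; rewrite ?undup_uniq // => k; rewrite !mem_undup.
Qed.

Definition zero := eword (iota 0 n).

Lemma x_zero : X :: zero ≡ zero.
Proof. by rewrite -[zero]/(eL 0 :: eword (iota 1 m.+1)) xe0_x x_etail. Qed.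

Lemma y_zero : Y :: zero ≡ zero.
Proof. by rewrite -{1}x_zero yx_e0 -[zero]/(eL 0 :: eword (iota 1 m.+1)) e_idem. Qed.

(** * Normal forms *)

Definition lower (s : seq nat) := [seq k.-1 | k <- s & 0 < k].

Definition raise (s : seq nat) := [seq k.+1 | k <- s & k < m.+1].

Definition pushed (b : bool) := if b then lower else raise.

(* [shift_dom b k] and [shift_val b k] are the domain and the values of x^k if b, of y^k if ~~ b. *)
Definition shift_dom (b : bool) k j := if b then j + k < n else (k <= j) && (j < n).

Definition shift_val (b : bool) k j := if b then j + k else j - k.

Lemma bounded_pushed b s : bounded s -> bounded (pushed b s).
Proof.
move=> /allP sn; apply/allP => j; case: b => /mapP [k];
  rewrite mem_filter => /andP[k0 /sn kn] ->; lia.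
Qed.

Lemma bounded_iter_pushed b k s : bounded s -> bounded (iter k (pushed b) s).
Proof. by move=> sn; elim: k => [|k IH] //=; apply: bounded_pushed. Qed.

Lemma mem_lower s j : (j \in lower s) = (j.+1 \in s).
Proof.
apply/mapP/idP => [[k] | js]; last by exists j.+1; rewrite ?mem_filter.
by rewrite mem_filter; case: k => // k /andP[_ ks] ->.
Qed.

Lemma mem_raise s j : (j \in raise s) = [&& 0 < j, j < n & j.-1 \in s].
Proof.
apply/mapP/and3P => [[k] | [j0 jn js]].
  by rewrite mem_filter => /andP[km ks] ->.
by exists j.-1; rewrite ?mem_filter ?js ?prednK //; lia.
Qed.

Lemma mem_iter_pushed b k j : (j \in iter k (pushed b) (iota 0 n)) = shift_dom b k j.
Proof.
elim: k j => [|k IH] j; first by rewrite mem_iota; case: b => /=; apply/idP/idP; lia.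
case: b IH => IH /=; rewrite ?mem_lower ?mem_raise IH /=; apply/idP/idP; lia.
Qed.

Lemma xy_eword b s w : bounded s -> xy b :: eword s ++ w ≡ eword (pushed b s) ++ xy b :: w.
Proof.
elim: s => [|k s IH] /=; first by case: b.
rewrite {1}/bounded /= => /andP[kn sn]; case: b IH => IH.
  by case: k kn => [|k] kn /=; rewrite ?xe0_x ?xeS_ex ?IH.
rewrite /= /raise /=; case: ifP => km /=; first by rewrite y_e ?IH.
have -> : k = m.+1 by lia.
by rewrite y_elast; apply: IH.
Qed.

Lemma xyk_eword b k s w : bounded s ->
  nseq k (xy b) ++ eword s ++ w ≡ eword (iter k (pushed b) s) ++ nseq k (xy b) ++ w.
Proof.
move=> sn; elim: k => [|k IH] //=.
by rewrite IH xy_eword // bounded_iter_pushed.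
Qed.

Lemma xyk_zero b k : nseq k (xy b) ++ zero ≡ zero.
Proof. by elim: k => [|k IH] //=; rewrite IH; case: (b); [apply: x_zero | apply: y_zero]. Qed.

Definition nf s k b := eword s ++ nseq k (xy b).

Lemma shift_dom_lt b k j : shift_dom b k j -> j < n.
Proof. by case: b => /=; lia. Qed.

Lemma shift_val_lt b k j : shift_dom b k j -> shift_val b k j < n.
Proof. by case: b => /=; lia. Qed.

Lemma shift_val_inj b c k l j : shift_dom b k j -> shift_dom c l j ->
  shift_val b k j = shift_val c l j -> nseq k (xy b) = nseq l (xy c).
Proof.
case: b c => [] [] /= dk dl e.
- by have -> : k = l by lia.
- by have [-> ->] : k = 0 /\ l = 0 by lia.
- by have [-> ->] : k = 0 /\ l = 0 by lia.
- by have -> : k = l by lia.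
Qed.

Lemma e_xyk_absorb b k j : j < n -> ~~ shift_dom b k j -> eL j :: nseq k (xy b) ≡ nseq k (xy b).
Proof.
case: b => /=.
  elim: k j => [|k IH] j jn jk /=; first lia.
  have [jm | ->] : j < m.+1 \/ j = m.+1 by lia.
    by rewrite -(xeS_ex _ jm) IH //; lia.
  by rewrite elast_x.
elim: k j => [|k IH] j jn jk /=; first lia.
case: j jn jk => [|j] jn jk; first by rewrite e0y_y.
by rewrite -y_e ?IH //; lia.
Qed.

Lemma nf_trim s k b : bounded s -> nf s k b ≡ nf [seq j <- s | shift_dom b k j] k b.
Proof.
rewrite /nf; elim: s => [|j s IH] //; rewrite {1}/bounded /= => /andP[jn sn].
case: ifP => jk /=; first by rewrite IH.
by rewrite e_eword_comm e_xyk_absorb ?jk ?IH.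
Qed.

Lemma nf_zero s k b : bounded s -> (forall j, shift_dom b k j -> j \in s) -> nf s k b ≡ zero.
Proof.
move=> sn sk; rewrite nf_trim // /nf (@eword_eq_mem _ (iter k (pushed b) (iota 0 n))).
  by have := xyk_eword b k [::] bounded_iota; rewrite !cats0 => <-; apply: xyk_zero.
by move=> j; rewrite mem_iter_pushed mem_filter; case: shift_dom (sk j) => // ->.
Qed.

Lemma xy_nf c s k b : bounded s ->
  exists s' k' b', bounded s' /\ xy c :: nf s k b ≡ nf s' k' b'.
Proof.
move=> sn; have sn' := bounded_pushed c sn.
case: (boolP ((c == b) || (k == 0))) => [cbk | /norP[cb k0]].
  exists (pushed c s), k.+1, c; split=> //.
  rewrite /nf; have -> : nseq k (xy b) = nseq k (xy c) by case/orP: cbk => /eqP->.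
  exact: xy_eword.
have -> : b = ~~ c by case: (b) (c) cb => [] [].
case: k k0 => // k _; exists (pushed c s ++ [:: if c then m.+1 else 0]), k, (~~ c); split.
  by rewrite /bounded all_cat -/(bounded _) sn'; case: (c); rewrite /= ?ltnSn.
by rewrite /nf eword_cat -catA /= xy_eword // xy_xyC.
Qed.

Lemma nf_exists w : exists s k b, bounded s /\ w ≡ nf s k b.
Proof.
elim: w => [|a w [s [k [b [sn wnf]]]]]; first by exists [::], 0, true.
suff [s' [k' [b' [sn' e]]]] : exists s' k' b', bounded s' /\ a :: nf s k b ≡ nf s' k' b'.
  by exists s', k', b'; rewrite wnf.
case: a => [||i]; [exact: (xy_nf true) | exact: (xy_nf false) |].
exists (val i :: s), k, b; split; first by rewrite /bounded /= ltn_ord.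
by rewrite /nf /= inord_val.
Qed.

(** * Words as partial maps *)

Local Notation ev := (evalw (@gen n)).

Lemma peE (i j : 'I_n) : pe i j = if j == i then None else Some j.
Proof. by rewrite ffunE. Qed.

Lemma pxE (j : 'I_n) : px n j = if j.+1 < n then Some (ordS j) else None.
Proof. by rewrite ffunE. Qed.

Lemma pyE (j : 'I_n) : py n j = if 0 < j then Some (ord_pred j) else None.
Proof. by rewrite ffunE. Qed.

Lemma val_ordS (j : 'I_n) : j.+1 < n -> val (ordS j) = j.+1.
Proof. by move=> jn; rewrite /= modn_small. Qed.

Lemma val_ord_pred (j : 'I_n) : 0 < j -> val (ord_pred j) = j.-1.
Proof.
move=> j0 /=; have -> : (j + n).-1 = j.-1 + n by lia.
by rewrite modnDr modn_small //; have := ltn_ord j; lia.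
Qed.

Lemma evalw_eword s w i : bounded s -> ev (eword s ++ w) i = if val i \in s then None else ev w i.
Proof.
elim: s => [|k s IH] //; rewrite {1}/bounded /= => /andP[kn sn].
by rewrite pcompE peE inord_eq // inE; case: eqP => //= _; rewrite IH.
Qed.

Lemma evalw_xyk b k i :
  ev (nseq k (xy b)) i = if shift_dom b k i then Some (inord (shift_val b k i)) else None.
Proof.
elim: k i => [|k IH] i.
  by rewrite /= ffunE /shift_dom /shift_val addn0 subn0 if_same inord_val ltn_ord; case: b.
rewrite /= pcompE; case: b IH => IH; rewrite ?pxE ?pyE /shift_dom /shift_val.
  case: ifP => [i1 | /negbT i1] /=; last by case: ifP => //; lia.
  by rewrite IH val_ordS // /shift_dom /shift_val addSnnS.
case: ifP => [i0 | /negbT i0] /=; last by case: ifP => //; lia.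
rewrite IH val_ord_pred // /shift_dom /shift_val.
have -> : i.-1 - k = i - k.+1 by lia.
by have := ltn_ord i; case: ifP; case: ifP => //; lia.
Qed.

Lemma evalw_nf s k b i : bounded s ->
  ev (nf s k b) i = if (val i \notin s) && shift_dom b k i
                    then Some (inord (shift_val b k i)) else None.
Proof. by move=> sn; rewrite evalw_eword // evalw_xyk; case: (val i \in s). Qed.

Lemma pe_idem (i : 'I_n) : pcomp (pe i) (pe i) = pe i.
Proof. by apply/ffunP => j; rewrite pcompE !peE; case: ifP => //= ji; rewrite peE ji. Qed.

Lemma pe_comm (i j : 'I_n) : pcomp (pe i) (pe j) = pcomp (pe j) (pe i).
Proof.
apply/ffunP => k; rewrite !pcompE !peE.
by case: ifP => ki; case: ifP => kj //=; rewrite !peE ?ki ?kj.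
Qed.

Lemma px_py (i : 'I_n) : val i = m.+1 -> pcomp (px n) (py n) = pe i.
Proof.
move=> im; apply/ffunP => j; rewrite pcompE pxE peE.
have -> : (j == i) = ~~ (j.+1 < n).
  by rewrite -(inj_eq val_inj) /= im; have := ltn_ord j; case: eqP; lia.
by case: ifP => //= jn; rewrite pyE val_ordS // ordSK.
Qed.

Lemma py_px (i : 'I_n) : val i = 0 -> pcomp (py n) (px n) = pe i.
Proof.
move=> i0; apply/ffunP => j; rewrite pcompE pyE peE.
have -> : (j == i) = ~~ (0 < j) by rewrite -(inj_eq val_inj) /= i0; case: eqP; lia.
by case: ifP => //= j0; rewrite pxE val_ord_pred // prednK // ltn_ord ord_predK.
Qed.

Lemma px_pe0 (i : 'I_n) : val i = 0 -> pcomp (px n) (pe i) = px n.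
Proof.
move=> i0; apply/ffunP => j; rewrite pcompE pxE.
by case: ifP => //= jn; rewrite peE -(inj_eq val_inj) val_ordS // i0.
Qed.

Lemma pe0_py (i : 'I_n) : val i = 0 -> pcomp (pe i) (py n) = py n.
Proof.
move=> i0; apply/ffunP => j; rewrite pcompE peE pyE.
by case: eqP => [-> | _] /=; rewrite ?i0 ?pyE.
Qed.

Lemma px_peS (i j : 'I_n) : val j = (val i).+1 -> pcomp (px n) (pe j) = pcomp (pe i) (px n).
Proof.
move=> ji; apply/ffunP => k; rewrite !pcompE pxE peE.
case: ifP => kn /=; last by case: eqP => //= _; rewrite pxE kn.
rewrite peE -(inj_eq val_inj) val_ordS // ji eqSS (inj_eq val_inj).
by case: eqP => //= _; rewrite pxE kn.
Qed.

Lemma x_etail_sound : ev (X :: es_tail n) = ev (eL 0 :: es_tail n).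
Proof.
have none (i : 'I_n) : 0 < i -> ev (es_tail n) i = None.
  move=> i0; rewrite es_tailE -[eword _]cats0 evalw_eword; last first.
    by apply/allP => k; rewrite mem_iota; lia.
  by rewrite mem_iota i0 add1n ltn_ord.
apply/ffunP => j; rewrite !evalw_cons !pcompE pxE peE inord_eq //.
have -> : obind (ev (es_tail n)) (if val j == 0 then None else Some j) = None.
  by case: eqP => //= j0; rewrite none //; lia.
by case: ifP => //= jn; rewrite none //= modn_small.
Qed.

Lemma rels_sound u v : (u, v) \in rels n -> ev u = ev v.
Proof.
rewrite /rels /U2 /U3 !mem_cat.
case/orP=> [/mapP [i _ [-> ->]] | ]; first by rewrite evalw2 evalw1 pe_idem.
case/orP=> [/orP[] /mapP [i] | ].
- by rewrite mem_filter => /andP[/eqP im _] [-> ->]; rewrite evalw2 evalw1 (px_py im).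
- by rewrite mem_filter => /andP[/eqP i0 _] [-> ->]; rewrite evalw2 evalw1 (py_px i0).
case/orP=> [/orP[] /mapP [i] | ].
- by rewrite mem_filter => /andP[/eqP i0 _] [-> ->]; rewrite evalw2 evalw1 (px_pe0 i0).
- by rewrite mem_filter => /andP[/eqP i0 _] [-> ->]; rewrite evalw2 evalw1 (pe0_py i0).
case/orP=> [/allpairsPdep [i [j [_ _ [-> ->]]]] | ]; first by rewrite !evalw2 pe_comm.
case/orP=> [/allpairsPdep [i [j [_ + [-> ->]]]] | /mapP [i]].
  by rewrite mem_filter => /andP[/eqP ji _]; rewrite !evalw2 (px_peS ji).
rewrite mem_filter => /andP[/eqP i0 _] [-> ->].
by rewrite -[i]inord_val i0 x_etail_sound.
Qed.

Lemma nf_empty s k b : bounded s -> (forall i, ev (nf s k b) i = None) -> nf s k b ≡ zero.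
Proof.
move=> sn none; apply: nf_zero => // j dj.
have jn := shift_dom_lt dj.
have := none (inord j); rewrite evalw_nf // val_inord // inordK // dj andbT.
by case: (j \in s).
Qed.

Lemma nf_complete s t k l b c : bounded s -> bounded t ->
  ev (nf s k b) = ev (nf t l c) -> nf s k b ≡ nf t l c.
Proof.
move=> sn tn /ffunP st.
case: (pickP (fun i : 'I_n => (val i \notin s) && shift_dom b k i)) => [i /andP[si db] | empty].
  have := st i; rewrite !evalw_nf // si db; case: ifP => // /andP[_ dc] [] /(congr1 val).
  rewrite !val_inord ?shift_val_lt // => /(shift_val_inj db dc) e.
  have {}e : nf t l c = nf t k b by rewrite /nf e.
  rewrite e in st *; rewrite (nf_trim _ _ sn) (nf_trim _ _ tn).
  apply: cat_cgr => //; apply: eword_eq_mem => j; rewrite !mem_filter.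
  case dj: (shift_dom b k j) => //=; have jn := shift_dom_lt dj.
  have := st (inord j); rewrite !evalw_nf // val_inord // inordK // dj !andbT.
  by case: (j \in s); case: (j \in t).
have none i : ev (nf s k b) i = None by rewrite evalw_nf // empty.
by rewrite (nf_empty sn none) (nf_empty tn) // => i; rewrite -st.
Qed.

Lemma rels_complete u v : ev u = ev v -> u ≡ v.
Proof.
have [s [k [b [sn us]]]] := nf_exists u; have [t [l [c [tn vt]]]] := nf_exists v.
rewrite (evalw_cgr rels_sound us) (evalw_cgr rels_sound vt) us vt.
exact: nf_complete.
Qed.

Lemma val_iter_gcyc k (i : 'I_n) : nat_of_ord (iter k (@gcyc n) i) = (i + k) %% n.
Proof.
elim: k => [|k IH]; first by rewrite addn0 modn_small.
by rewrite /= /gcyc /= IH -addn1 modnDml addn1 addnS.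
Qed.

Lemma OCI_nf a : in_OCI a -> exists s k b, bounded s /\ ev (nf s k b) = a.
Proof.
move=> [[_ [g [[k kn gk] ag]]] op].
have gval i : nat_of_ord (g i) = (i + k) %% n by rewrite gk val_iter_gcyc.
set holes := [seq val j | j <- enum 'I_n & ~~ in_dom a j].
have hn : bounded holes by apply/allP => _ /mapP [j _ ->]; apply: ltn_ord.
have mem_holes i : (val i \in holes) = ~~ in_dom a i.
  apply/mapP/idP => [[j] | di]; last by exists i; rewrite // mem_filter di mem_enum.
  by rewrite mem_filter => /andP[dj _] /val_inj ->.
have outside i : ~~ in_dom a i -> a i = None by rewrite negbK => /eqP.
(* If one point of the domain wraps around (n <= i + k), order preservation makes all of them
   wrap, and a is a restriction of y^(n-k); otherwise it is a restriction of x^k. *)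
case: (pickP (fun i : 'I_n => in_dom a i && (n <= i + k))) => [i0 /andP[d0 h0] | nowrap].
  exists holes, (n - k), false; split=> //; apply/ffunP => i.
  rewrite evalw_nf // mem_holes negbK /=.
  case: (boolP (in_dom a i)) => di /=; last by rewrite outside.
  have ik : n <= i + k.
    rewrite leqNgt; apply/negP => ik; have i0n := ltn_ord i0.
    have := op i i0 (g i) (g i0) (ag i di) (ag i0 d0).
    rewrite !gval modn_small // -[i0 + k](subnK h0) modnDr modn_small; lia.
  rewrite (_ : n - k <= i) ?ltn_ord ?ag //; last by lia.
  congr Some; apply: val_inj; rewrite /= inordK; last by have := ltn_ord i; lia.
  by rewrite gval -[i + k](subnK ik) modnDr modn_small; have := ltn_ord i; lia.
exists holes, k, true; split=> //; apply/ffunP => i.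
rewrite evalw_nf // mem_holes negbK /=.
case: (boolP (in_dom a i)) => di /=; last by rewrite outside.
have := nowrap i; rewrite /= di /= => /negbT; rewrite -ltnNge => ik.
by rewrite ik ag //; congr Some; apply: val_inj; rewrite /= inordK // gval modn_small.
Qed.

Lemma px_OCI : in_OCI (px n).
Proof.
split; first split.
- apply/forallP => i; apply/forallP => j; apply/implyP => /andP[].
  rewrite /in_dom !pxE; case: ifP => // i1 _; case: ifP => // j1 /eqP [].
  by rewrite !modn_small // => -[/val_inj->].
- exists (@gcyc n); split; first by exists 1.
  by move=> i; rewrite /in_dom pxE; case: ifP.
- move=> i j ai aj; rewrite !pxE; case: ifP => // i1 [<-]; case: ifP => // j1 [<-].
  by rewrite !val_ordS.
Qed.

Lemma py_OCI : in_OCI (py n).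
Proof.
split; first split.
- apply/forallP => i; apply/forallP => j; apply/implyP => /andP[].
  rewrite /in_dom !pyE; case: ifP => // i0 _; case: ifP => // j0 /eqP [].
  change (val (ord_pred i) = val (ord_pred j) -> i == j); rewrite !val_ord_pred // => e.
  by apply/eqP/val_inj => /=; lia.
- exists (iter m.+1 (@gcyc n)); split; first by exists m.+1.
  move=> i; rewrite /in_dom pyE; case: ifP => // i0 _; congr Some; apply: val_inj.
  change (nat_of_ord (ord_pred i) = iter m.+1 (@gcyc n) i).
  by rewrite val_iter_gcyc /=; congr (_ %% _); lia.
- move=> i j ai aj; rewrite !pyE; case: ifP => // i0 [<-]; case: ifP => // j0 [<-].
  by rewrite !val_ord_pred //; lia.
Qed.

Lemma pe_OCI (i : 'I_n) : in_OCI (pe i).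
Proof.
split; first split.
- apply/forallP => j; apply/forallP => k; apply/implyP => /andP[].
  by rewrite /in_dom !peE; case: ifP => // _ _; case: ifP => // _ /eqP [] ->.
- exists id; split; first by exists 0.
  by move=> j; rewrite /in_dom peE; case: ifP.
- by move=> j k ? ?; rewrite !peE; case: ifP => // _ [<-]; case: ifP => // _ [<-].
Qed.

Lemma gen_inj : injective (@gen n).
Proof.
case=> [||i] [||j] //= /ffunP.
- by move/(_ ord0); rewrite pxE pyE.
- by move/(_ ord0); rewrite pxE peE; case: ifP.
- by move/(_ ord0); rewrite pxE pyE.
- move/(_ ord_max); rewrite pyE peE; case: ifP => // _ /(congr1 (omap val)).
  by rewrite [omap _ _]/= modnDr modn_small // => -[]; lia.
- by move/(_ ord0); rewrite pxE peE; case: ifP.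
- move/(_ ord_max); rewrite pyE peE; case: ifP => // _ /(congr1 (omap val)).
  by rewrite [omap _ (Some (ord_pred _))]/= modnDr modn_small // => -[]; lia.
- by move/(_ i); rewrite !peE eqxx; case: eqP => [-> |].
Qed.

Lemma OCI_presentation : is_presentation (@in_OCI n) (@gen n) (rels n).
Proof.
split=> [[||i] | | | u v]; [exact: px_OCI | exact: py_OCI | exact: pe_OCI | exact: gen_inj | |].
  by move=> a /OCI_nf [s [k [b [_ <-]]]]; exists (nf s k b).
by split; [apply: rels_complete | apply: evalw_cgr rels_sound].
Qed.

End Presentation.

(** * Counting generators and relations *)

Lemma card_letter N : #|{: letter N}| = N + 2.
Proof.
have enc_bij : bijective (@letter_enc N).
  by exists (@letter_dec N); [exact: letter_encK | case=> [[i|]|]].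
by rewrite (bij_eq_card enc_bij) !card_option card_ord addn2.
Qed.

Lemma count_enum_ord N (P : pred nat) :
  count (fun i : 'I_N => P i) (enum 'I_N) = count P (iota 0 N).
Proof. by rewrite -val_enum_ord count_map. Qed.

Lemma count_iota_eq N c : count (pred1 c) (iota 0 N) = (c < N).
Proof. by rewrite count_uniq_mem ?iota_uniq // mem_iota. Qed.

Lemma count_iota_gt N i : count (fun k => i < k) (iota 0 N) = N - i.+1.
Proof.
elim: N => [|N IH] //; rewrite -[in iota 0 N.+1]addn1 iotaD count_cat IH /=.
by rewrite add0n addn0; case: ltnP => /= ?; lia.
Qed.

Lemma count_iota_lt N b : count (fun k => k < b) (iota 0 N) = minn b N.
Proof.
elim: N => [|N IH]; first by rewrite minn0.
by rewrite -[in iota 0 N.+1]addn1 iotaD count_cat IH /= add0n addn0; case: ltnP => /= ?; lia.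
Qed.

Lemma sumn_iota_sub N : sumn [seq N - i.+1 | i <- iota 0 N] = 'C(N, 2).
Proof.
elim: N => [|N IH] //.
rewrite -[iota 0 N.+1]/(0 :: iota 1 N) /= -[1]/(1 + 0) iotaDl -map_comp.
by rewrite binS bin1 -IH addnC; congr (_ + _); lia.
Qed.

Lemma size_rels m : size (rels m.+2) = (m.+2 ^ 2 + 3 * m.+2 + 8)./2.
Proof.
have size_at c : size [seq i <- enum 'I_m.+2 | val i == c] = (c < m.+2).
  by rewrite size_filter (@count_enum_ord _ (pred1 c)) count_iota_eq.
have s1 : size (U1 m.+2) = m.+2 by rewrite size_map size_enum_ord.
have s2 : size (U2 m.+2) = 2 by rewrite size_cat !size_map !size_at ltnSn.
have s3 : size (U3 m.+2) = 2 by rewrite size_cat !size_map !size_at.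
have s4 : size (U4 m.+2) = 'C(m.+2, 2).
  rewrite size_allpairs_dep -sumn_iota_sub -val_enum_ord -map_comp; congr sumn.
  by apply: eq_map => i; rewrite size_filter (@count_enum_ord _ (fun k => i < k)) count_iota_gt.
have s5 : size (U5 m.+2) = m.+1.
  rewrite size_allpairs_dep (eq_map (fun i => size_at (val i).+1)) sumn_count.
  by rewrite (@count_enum_ord _ (fun k => k < m.+1)) count_iota_lt (minn_idPl (leqnSn _)).
have s6 : size (U6 m.+2) = 1 by rewrite size_map size_at.
rewrite /rels size_cat s1 size_cat s2 size_cat s3 size_cat s4 size_cat s5 s6.
by rewrite bin2 -!divn2; lia.
Qed.

Theorem theorem2p16 (n : nat) (hn : 2 <= n) :
  [/\ is_presentation (@in_OCI n) (@gen n) (rels n),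
      #|{: letter n}| = n + 2 &
      size (rels n) = (n ^ 2 + 3 * n + 8)./2].
Proof.
case: n hn => [|[|m]] // _.
by split; [exact: OCI_presentation | exact: card_letter | exact: size_rels].
Qed.
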